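(* Let $\mathcal X$ be a subset of the nonzero elements of a field, let $g:\mathcal X\to\mathcal X$ be a bijection and $f:\mathcal X\times\mathcal X\to\mathcal X$ a function such that the map $S:\mathcal X^2\times\mathcal X^2\to\mathcal X^2\times\mathcal X^2$, $$S(x,X;y,Y)=(u,U;v,V)=\Big(g^{-1}\Big(\frac{g(x)}{f(v,V)}\Big),\;X\frac{f(y,Y)}{f(v,V)};\;g^{-1}\big(Xg(y)\big),\;XY\Big)$$ is well defined, and suppose that $f(u,U)f(v,V)=f(x,X)$ for all $(x,X;y,Y)$, where $(u,U;v,V)=S(x,X;y,Y)$. Then $S$ is a pentagon map.
   Context: Pentagon map: for a set $Y$ (here $Y=\mathcal X^2$) and $S:Y\times Y\to Y\times Y$, set $S_{12}=S\times\mathrm{id}_Y$, $S_{23}=\mathrm{id}_Y\times S$, $S_{13}(y_1,y_2,y_3)=(p,y_2,q)$ with $(p,q)=S(y_1,y_3)$; $S$ is a pentagon map if $S_{12}\circ S_{13}\circ S_{23}=S_{23}\circ S_{12}$ (rightmost applied first). *)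

From HB Require Import structures.
From mathcomp Require Import all_boot all_order all_algebra.
Set Implicit Arguments. Unset Strict Implicit. Unset Printing Implicit Defensive.
Import GRing.Theory.
Local Open Scope ring_scope.

(* Generic pentagon maps, on a type Y restricted to a domain predicate P
   (the "set" Y of the paper is {y : Y | P y}). *)
Section Pentagon.
Variable Y : Type.
Definition S12 (S : Y * Y -> Y * Y) (t : Y * Y * Y) : Y * Y * Y :=
  let: (y1, y2, y3) := t in let: (p, q) := S (y1, y2) in (p, q, y3).
Definition S23 (S : Y * Y -> Y * Y) (t : Y * Y * Y) : Y * Y * Y :=
  let: (y1, y2, y3) := t in let: (p, q) := S (y2, y3) in (y1, p, q).
Definition S13 (S : Y * Y -> Y * Y) (t : Y * Y * Y) : Y * Y * Y :=
  let: (y1, y2, y3) := t in let: (p, q) := S (y1, y3) in (p, y2, q).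
Definition pentagon_on (P : Y -> Prop) (S : Y * Y -> Y * Y) : Prop :=
  forall y1 y2 y3, P y1 -> P y2 -> P y3 ->
    S12 S (S13 S (S23 S (y1, y2, y3))) = S23 S (S12 S (y1, y2, y3)).
End Pentagon.

Definition Smap (K : fieldType) (g gi : K -> K) (f : K -> K -> K)
    (a : (K * K) * (K * K)) : (K * K) * (K * K) :=
  let: ((x, X), (y, Y)) := a in
  let v := gi (X * g y) in
  let V := X * Y in
  let u := gi (g x / f v V) in
  let U := X * f y Y / f v V in
  ((u, U), (v, V)).

Definition inXX (K : fieldType) (A : {pred K}) (p : K * K) : Prop :=
  p.1 \in A /\ p.2 \in A.

From HB Require Import structures.
From mathcomp Require Import all_boot all_order all_algebra.
Import GRing.Theory.
From mathcomp Require Import ring.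
Set Implicit Arguments. Unset Strict Implicit. Unset Printing Implicit Defensive.
Local Open Scope ring_scope.

(* Since g is injective on A, S((x,X),(y,Y)) = ((u,U),(v,V)) is characterised
   by g v = X g(y), V = X Y, g u = g(x) / f(v,V) and U = X f(y,Y) / f(v,V).
   Through these equations the last two components of the pentagon equation
   agree by field arithmetic, while the first one also needs the identity
   f(u,U) f(v,V) = f(x,X) for S((y,Y),(z,Z)) and for S(v1,(z,Z)), where v1 is
   the second output of S((x,X),(y,Y)). *)

Section TripleMaps.

Variables (Y : Type) (S : Y * Y -> Y * Y).

Lemma S12E a b c p q : S (a, b) = (p, q) -> S12 S (a, b, c) = (p, q, c).
Proof. by rewrite /S12 => ->. Qed.

Lemma S23E a b c p q : S (b, c) = (p, q) -> S23 S (a, b, c) = (a, p, q).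
Proof. by rewrite /S23 => ->. Qed.

Lemma S13E a b c p q : S (a, c) = (p, q) -> S13 S (a, b, c) = (p, b, q).
Proof. by rewrite /S13 => ->. Qed.

End TripleMaps.

Section SmapPentagon.

Variables (K : fieldType) (A : {pred K}) (g gi : K -> K) (f : K -> K -> K).

Hypothesis A_neq0 : 0 \notin A.
Hypothesis giA : {in A, forall x, gi x \in A}.
Hypothesis gK : {in A, cancel g gi}.
Hypothesis giK : {in A, cancel gi g}.
Hypothesis fA : {in A &, forall x y, f x y \in A}.
Hypothesis Smap_wd : forall x X y Y, x \in A -> X \in A -> y \in A -> Y \in A ->
  let v := gi (X * g y) in
  let V := X * Y in
  [/\ X * g y \in A, X * Y \in A,
      g x / f v V \in A & X * f y Y / f v V \in A].
Hypothesis fSmap : forall x X y Y, x \in A -> X \in A -> y \in A -> Y \in A ->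
  let: ((u, U), (v, V)) := Smap g gi f ((x, X), (y, Y)) in
  f u U * f v V = f x X.

Local Notation S := (Smap g gi f).

Lemma f_neq0 x y : x \in A -> y \in A -> f x y != 0.
Proof. by move=> hx hy; apply: contraNneq A_neq0 => <-; apply: fA. Qed.

Lemma g_inj : {in A &, injective g}.
Proof. exact: can_in_inj gK. Qed.

Lemma Smap_in x X y Y u U v V : x \in A -> X \in A -> y \in A -> Y \in A ->
  S ((x, X), (y, Y)) = ((u, U), (v, V)) -> [/\ u \in A, U \in A, v \in A & V \in A].
Proof.
move=> hx hX hy hY; have [hXg hXY hgu hU] := Smap_wd hx hX hy hY.
by case=> <- <- <- <-; split=> //; apply: giA.
Qed.

Lemma Smap_spec x X y Y u U v V : x \in A -> X \in A -> y \in A -> Y \in A ->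
  S ((x, X), (y, Y)) = ((u, U), (v, V)) ->
  [/\ g v = X * g y, V = X * Y, g u = g x / f v V & U = X * f y Y / f v V].
Proof.
move=> hx hX hy hY; have [hXg _ hgu _] := Smap_wd hx hX hy hY.
by case=> <- <- <- <-; split=> //; apply: giK.
Qed.

Lemma Smap_of_spec x X y Y u U v V : u \in A -> v \in A ->
  [/\ g v = X * g y, V = X * Y, g u = g x / f v V & U = X * f y Y / f v V] ->
  S ((x, X), (y, Y)) = ((u, U), (v, V)).
Proof.
by move=> hu hv [gv -> gu ->]; rewrite /Smap -gv gK // -gu gK.
Qed.

Lemma f_Smap x X y Y u U v V : x \in A -> X \in A -> y \in A -> Y \in A ->
  S ((x, X), (y, Y)) = ((u, U), (v, V)) -> f u U * f v V = f x X.
Proof. by move=> hx hX hy hY; case=> <- <- <- <-; apply: fSmap. Qed.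

Lemma Smap_pentagon x X y Y z Z :
  x \in A -> X \in A -> y \in A -> Y \in A -> z \in A -> Z \in A ->
  S12 S (S13 S (S23 S ((x, X), (y, Y), (z, Z)))) =
  S23 S (S12 S ((x, X), (y, Y), (z, Z))).
Proof.
move=> hx hX hy hY hz hZ.
case E1: (S ((x, X), (y, Y))) => [[u1 U1] [v1 V1]].
have [hu1 hU1 hv1 hV1] := Smap_in hx hX hy hY E1.
case E2: (S ((v1, V1), (z, Z))) => [[u2 U2] [v2 V2]].
have [hu2 hU2 hv2 hV2] := Smap_in hv1 hV1 hz hZ E2.
case E3: (S ((y, Y), (z, Z))) => [[p P] [w W]].
have [hp hP hw hW] := Smap_in hy hY hz hZ E3.
case E4: (S ((x, X), (w, W))) => [[u3 U3] [v3 V3]].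
have [hu3 hU3 hv3 hV3] := Smap_in hx hX hw hW E4.
rewrite (S23E _ E3) (S13E _ E4) (S12E _ E1) (S23E _ E2).
have [gv1 eV1 gu1 eU1] := Smap_spec hx hX hy hY E1.
have [gv2 eV2 gu2 eU2] := Smap_spec hv1 hV1 hz hZ E2.
have [gw eW gp eP] := Smap_spec hy hY hz hZ E3.
have [gv3 eV3 gu3 eU3] := Smap_spec hx hX hw hW E4.
have fv1 : f u2 U2 * f v2 V2 = f v1 V1 := f_Smap hv1 hV1 hz hZ E2.
have fy : f p P * f w W = f y Y := f_Smap hy hY hz hZ E3.
have v3E : v3 = v2 by apply: g_inj; rewrite // gv3 gv2 gw eV1 mulrA.
have V3E : V3 = V2 by rewrite eV3 eV2 eV1 eW mulrA.
rewrite v3E V3E in gu3 eU3 *.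
apply: S12E; apply: Smap_of_spec => //; split.
- by rewrite gu2 eU3 gp gv1; field; rewrite ?f_neq0.
- by rewrite eU2 eU3 eP eV1; field; rewrite ?f_neq0.
- by rewrite gu1 gu3 -fv1; field; rewrite ?f_neq0.
- by rewrite eU1 eU3 -fv1 -fy; field; rewrite ?f_neq0.
Qed.

End SmapPentagon.

Theorem mainTheorem7 (K : fieldType) (A : {pred K}) (g gi : K -> K)
    (f : K -> K -> K) :
  (* A is a subset of the nonzero elements *)
  0 \notin A ->
  (* g : A -> A is a bijection with inverse gi *)
  {in A, forall x, g x \in A} ->
  {in A, forall x, gi x \in A} ->
  {in A, cancel g gi} ->
  {in A, cancel gi g} ->
  (* f : A x A -> A *)
  {in A &, forall x y, f x y \in A} ->
  (* S is well defined: all arguments of g^{-1} and all components lie in A *)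
  (forall x X y Y, x \in A -> X \in A -> y \in A -> Y \in A ->
     let v := gi (X * g y) in
     let V := X * Y in
     [/\ X * g y \in A, X * Y \in A,
         g x / f v V \in A & X * f y Y / f v V \in A]) ->
  (* f(u,U) f(v,V) = f(x,X) *)
  (forall x X y Y, x \in A -> X \in A -> y \in A -> Y \in A ->
     let: ((u, U), (v, V)) := Smap g gi f ((x, X), (y, Y)) in
     f u U * f v V = f x X) ->
  pentagon_on (inXX A) (Smap g gi f).
Proof.
move=> A_neq0 _ giA gK giK fA Smap_wd fSmap.
move=> [x X] [y Y] [z Z] [hx hX] [hy hY] [hz hZ].
exact: (Smap_pentagon A_neq0 giA gK giK fA Smap_wd fSmap hx hX hy hY hz hZ).
Qed.
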